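(* Under the standing assumptions, let $v$ be a vertex of degree $7$ in $G$. If there is a vertex $u$ of degree $3$ such that the edge $vu$ lies on a $3$-face, then there is no other vertex $w\neq u$ of degree $3$ such that the edge $vw$ lies on a $3$-face.
   Context: Standing assumptions: A total $9$-coloring of a graph is an assignment of colors from $\{1,\dots,9\}$ to the vertices and edges such that adjacent vertices, edges sharing an endpoint, and a vertex and an incident edge receive different colors. A $4$-fan is the graph on six vertices $c,u_1,\dots,u_5$ with edges $cu_j$ ($1\le j\le5$) and $u_ju_{j+1}$ ($1\le j\le4$). $G$ is a minimal counterexample: $G$ is a simple planar graph with maximum degree $8$, containing no subgraph isomorphic to a $4$-fan, that has no total $9$-coloring, and such that every simple planar graph $H$ with maximum degree at most $8$, no subgraph isomorphic to a $4$-fan, and $|V(H)|+|E(H)|<|V(G)|+|E(G)|$ has a total $9$-coloring. $G$ is considered with a fixed plane embedding; a $3$-face is a face of length $3$. *)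

(* Simple graphs as symmetric irreflexive relations on a
   finType; plane embeddings as planar rotation systems (combinatorial maps). *)
From mathcomp Require Import all_boot.
Set Implicit Arguments.
Unset Strict Implicit.
Unset Printing Implicit Defensive.

Section Graphs.
Variable T : finType.
Implicit Types (e : rel T) (x y z : T).

Definition simple_graph e : Prop := symmetric e /\ irreflexive e.

Definition deg e x : nat := #|[pred y | e x y]|.

Definition darts e : {set T * T} := [set p | e p.1 p.2].
Definition nedges e : nat := #|darts e| %/ 2.

Definition max_deg_le8 e : Prop := forall x, deg e x <= 8.
Definition max_deg_eq8 e : Prop := max_deg_le8 e /\ exists x, deg e x = 8.

Definition has_4fan e : Prop :=
  exists c u1 u2 u3 u4 u5 : T,
    [&& uniq [:: c; u1; u2; u3; u4; u5],
        e c u1, e c u2, e c u3, e c u4, e c u5,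
        e u1 u2, e u2 u3, e u3 u4 & e u4 u5].

Definition total9_colorable e : Prop :=
  exists (cv : T -> 'I_9) (ce : T -> T -> 'I_9),
    [/\ forall x y, e x y -> ce x y = ce y x,
        forall x y, e x y -> cv x != cv y,
        forall x y z, e x y -> e x z -> y != z -> ce x y != ce x z
      & forall x y, e x y -> ce x y != cv x].

Definition rotation_system e (rot : T -> T -> T) : Prop :=
  forall x,
    [/\ forall y, e x y -> e x (rot x y),
        {in [pred y | e x y] &, injective (rot x)}
      & forall y z, e x y -> e x z -> fconnect (rot x) y z].

Definition face_succ e (rot : T -> T -> T) (p : T * T) : T * T :=
  if e p.1 p.2 then (p.2, rot p.2 p.1) else p.

Definition nfaces e rot : nat :=
  #|[set froot (face_succ e rot) d | d in darts e]|.

Definition ncomp e : nat := #|[set root e x | x : T]|.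
Definition nisolated e : nat := #|[set x | [forall y, ~~ e x y]]|.

(* planar (genus 0) rotation system: Euler's formula V - E + F = 2 for every
   component with an edge; summed: V - E + F + #isolated = 2 #components *)
Definition planar_rotation e rot : Prop :=
  rotation_system e rot /\
  #|T| + nfaces e rot + nisolated e = 2 * ncomp e + nedges e.

Definition planar e : Prop := exists rot, planar_rotation e rot.

Definition edge_on_3face e rot x y : bool :=
  e x y && ((order (face_succ e rot) (x, y) == 3)
            || (order (face_succ e rot) (y, x) == 3)).

End Graphs.

Definition minimal_counterexample (T : finType) (e : rel T) : Prop :=
  [/\ simple_graph e, planar e, max_deg_eq8 e, ~ has_4fan e &
      ~ total9_colorable e] /\
      forall (T' : finType) (e' : rel T'),
        simple_graph e' -> planar e' -> max_deg_le8 e' -> ~ has_4fan e' ->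
        #|T'| + nedges e' < #|T| + nedges e -> total9_colorable e'.

From mathcomp Require Import all_boot zify.
Set Implicit Arguments.
Unset Strict Implicit.
Unset Printing Implicit Defensive.

(* Since [vu] lies on a triangle [vux], its two sides lie on distinct faces;
   deleting [vu] merges them, so [V - E + F] is preserved, [x] keeps the
   components unchanged and no 4-fan appears: by minimality [G - vu] has a
   total 9-colouring.  Uncolour [u] and [w] (degree 3: they can be recoloured
   at the end); it remains to colour [vu], for which two colours are free at
   [v].  If [uw] is an edge, uncolour it too, colour [vu] and recolour [uw].
   Otherwise, with [z] the third neighbour of [u], either a free colour avoids
   [ux] and [uz]; or one of the colours of [ux], [uz] is missing at [w], and
   [vw] takes it while [vu] takes the old colour of [vw]; or the other edges
   of [w] carry exactly these two colours, and exchanging the colours of [ux]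
   and [vx] first makes the previous move possible.  Either way [G] is totally
   9-colourable, a contradiction. *)

Section Excise.
Variables (D : finType) (g : D -> D) (c : D).

Definition excise (t : D) := if g t == c then g c else g t.

Lemma fconnect_excise_iter n y :
  y != c -> iter n g y != c -> fconnect excise y (iter n g y).
Proof.
elim: n {-2}n (leqnn n) y => [|N IH] n.
  by rewrite leqn0 => /eqP -> y _ _; exact: connect0.
case: n => [|n] Hn y yc; first by move=> _; exact: connect0.
rewrite iterSr.
case: (eqVneq (g y) c) => gy.
  case: n Hn => [|m] Hm; first by rewrite /= gy eqxx.
  rewrite gy iterSr => Hit.
  have gc : g c != c.
    by apply/negP => /eqP E; move: Hit; rewrite E iter_fix ?eqxx.
  apply: connect_trans (connect1 _) (IH m _ _ gc Hit).
    by rewrite /= /excise gy eqxx.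
  by rewrite -ltnS ltnW.
move=> Hit; apply: connect_trans (connect1 _) (IH n _ _ gy Hit).
  by rewrite /= /excise (negbTE gy).
by rewrite -ltnS.
Qed.

Lemma fconnect_excise y z :
  y != c -> z != c -> fconnect g y z -> fconnect excise y z.
Proof.
move=> yc zc /iter_findex E; rewrite -E.
by apply: fconnect_excise_iter; rewrite ?E.
Qed.

End Excise.

Lemma card_imset_kernel (X Y1 Y2 : finType) (h1 : X -> Y1) (h2 : X -> Y2)
    (A : {set X}) :
  {in A &, forall x y, (h1 x == h1 y) = (h2 x == h2 y)} ->
  #|h1 @: A| = #|h2 @: A|.
Proof.
move=> K.
case: (set_0Vmem A) => [->|[x0 x0A]]; first by rewrite !imset0 !cards0.
pose g r := h2 (odflt x0 [pick x in A | h1 x == r]).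
have gE : {in A, forall x, g (h1 x) = h2 x}.
  move=> x xA; rewrite /g; case: pickP => [y /andP[yA /eqP E]|/(_ x)].
    by apply/eqP; rewrite /= -K // E.
  by rewrite xA eqxx.
have -> : h2 @: A = g @: (h1 @: A).
  by rewrite -imset_comp; apply: eq_in_imset => x xA /=; rewrite gE.
symmetry; apply: card_in_imset => _ _ /imsetP[x xA ->] /imsetP[y yA ->].
by rewrite !gE // => /eqP; rewrite -K // => /eqP.
Qed.

(* Removing two points [p], [q] in distinct orbits of [f] and rerouting
   around them fuses these two orbits, so the orbit count drops by one. *)
Section Reroute.
Variables (D : finType) (f f' : D -> D) (A A' : {set D}) (p q : D).
Hypothesis f_inj : injective f.
Hypothesis f'_inj : injective f'.
Hypothesis A'E : forall d, (d \in A') = [&& d \in A, d != p & d != q].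
Hypothesis f_closed : forall d, d \in A -> f d \in A.
Hypothesis f'E : forall d, f' d = if d \in A' then
   (if f d == p then f q else if f d == q then f p else f d) else d.
Hypothesis not_fconnect_pq : ~~ fconnect f p q.
Hypothesis fpA' : f p \in A'.
Hypothesis fqA' : f q \in A'.

Local Notation R := (fconnect f).

Let Rsym x y : R x y = R y x. Proof. exact: fconnect_sym. Qed.
Let Rtrans x y z : R x y -> R y z -> R x z. Proof. exact: connect_trans. Qed.

Definition fused x y := R x y || ((R x p || R x q) && (R y p || R y q)).

Lemma fused_trans x y z : fused x y -> fused y z -> fused x z.
Proof.
rewrite /fused.
case/orP=> [Rxy|/andP[Hx Hy]]; case/orP=> [Ryz|/andP[Hy' Hz]].
- by rewrite (Rtrans Rxy Ryz).
- by case/orP: Hy' => H; rewrite (Rtrans Rxy H) Hz ?orbT.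
- by rewrite Rsym in Ryz; case/orP: Hy => H; rewrite (Rtrans Ryz H) Hx ?orbT.
- by rewrite Hx Hz orbT.
Qed.

Lemma fused_step z : fused z (f' z).
Proof.
rewrite f'E /fused; case: ifP => zA; last by rewrite connect0.
have Hq : R (f q) q by rewrite Rsym fconnect1.
have Hp : R (f p) p by rewrite Rsym fconnect1.
case: ifP => [/eqP E|_].
  have Rz : R z p by rewrite -E fconnect1.
  by rewrite Rz Hq !orbT.
case: ifP => [/eqP E|_]; last by rewrite fconnect1.
have Rz : R z q by rewrite -E fconnect1.
by rewrite Rz Hp !orbT.
Qed.

Lemma fused_of_fconnect x y : fconnect f' x y -> fused x y.
Proof.
move/iter_findex => <-; elim: (findex _ _ _) => [|n IH].
  by rewrite /fused connect0.
by rewrite iterS; apply: fused_trans IH (fused_step _).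
Qed.

Lemma iter_reroute_agree n x : x \in A ->
  (forall i, i <= n -> (iter i f x != p) && (iter i f x != q)) ->
  iter n f' x = iter n f x.
Proof.
elim: n x => [//|n IH] x xA H.
rewrite !iterSr.
have xA' : x \in A' by rewrite A'E xA; exact: (H 0).
have /andP[fp fq] := H 1 isT.
have -> : f' x = f x by rewrite f'E xA' /= (negbTE fp) (negbTE fq).
apply: IH; first exact: f_closed.
by move=> i le; rewrite -iterSr; apply: H.
Qed.

Lemma fconnect_reroute_away x y :
  x \in A -> ~~ R x p -> ~~ R x q -> R x y -> fconnect f' x y.
Proof.
move=> xA nxp nxq Rxy.
rewrite -(iter_findex Rxy) -iter_reroute_agree //; first exact: fconnect_iter.
move=> i _; apply/andP; split.
  by apply: contraNneq nxp => <-; exact: fconnect_iter.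
by apply: contraNneq nxq => <-; exact: fconnect_iter.
Qed.

Lemma fconnect_reroute_jump a b x : (a == p) && (b == q) || (a == q) && (b == p) ->
  x \in A' -> R x a -> fconnect f' x (f b).
Proof.
move=> ab xA' Rxa.
have pq : p != q by apply: contraNneq not_fconnect_pq => ->; exact: connect0.
have nab : ~~ R a b.
  by case/orP: ab => /andP[/eqP-> /eqP->] //; rewrite Rsym.
have f'a : forall d, d \in A' -> f d == a -> f' d = f b.
  move=> d dA' /eqP fd; rewrite f'E dA' fd.
  case/orP: ab => /andP[/eqP-> /eqP->]; first by rewrite eqxx.
  by rewrite eqxx [q == p]eq_sym (negbTE pq).
have xA : x \in A by move: xA'; rewrite A'E => /and3P[].
have xa : x != a.
  by move: xA'; rewrite A'E; case/orP: ab => /andP[/eqP-> _] /and3P[].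
set n := findex f x a.
have En : iter n f x = a := iter_findex Rxa.
have nlt : n < order f x := findex_max Rxa.
case En0 : n => [|m].
  by move: En; rewrite En0 /= => E; rewrite E eqxx in xa.
have H : forall i, i <= m -> (iter i f x != p) && (iter i f x != q).
  move=> i le.
  have ia : iter i f x != a.
    apply/negP => /eqP E.
    have : findex f x (iter i f x) = i.
      by apply: findex_iter; rewrite (leq_ltn_trans le) // -ltnS -En0 ltnW.
    by rewrite E -/n En0 => Ei; rewrite -Ei ltnn in le.
  have ib : iter i f x != b.
    apply/negP => /eqP E; move: nab; rewrite -E.
    by rewrite Rsym in Rxa; rewrite (Rtrans Rxa (fconnect_iter _ _ _)).
  by case/orP: ab => /andP[/eqP ea /eqP eb]; rewrite -ea -eb ?ia ?ib // ib ia.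
have dA' : iter m f x \in A'.
  rewrite A'E H // andbT.
  by elim: (m) => //= k IH; exact: f_closed.
apply: connect_trans (fconnect_iter f' m x) _.
rewrite (iter_reroute_agree xA H) -(f'a _ dA'); first exact: fconnect1.
by rewrite -iterS -En0 En.
Qed.

Lemma fconnect_reroute_hub z : z \in A' -> R z p || R z q -> fconnect f' z (f p).
Proof.
have pq : (p == p) && (q == q) || (p == q) && (q == p) by rewrite !eqxx.
have qp : (q == p) && (p == q) || (q == q) && (p == p) by rewrite !eqxx orbT.
move=> zA' /orP[Rzp|Rzq]; last exact: (fconnect_reroute_jump qp zA' Rzq).
apply: connect_trans (fconnect_reroute_jump pq zA' Rzp) _.
by apply: (fconnect_reroute_jump qp fqA'); rewrite Rsym fconnect1.
Qed.

Lemma fconnect_rerouteE x y :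
  x \in A' -> y \in A' -> fconnect f' x y = fused x y.
Proof.
move=> xA' yA'; apply/idP/idP; first exact: fused_of_fconnect.
have xA : x \in A by move: xA'; rewrite A'E => /and3P[].
have hub2 u' w' : u' \in A' -> w' \in A' -> R u' p || R u' q ->
    R w' p || R w' q -> fconnect f' u' w'.
  move=> uA' wA' Hu Hw; apply: connect_trans (fconnect_reroute_hub uA' Hu) _.
  by rewrite fconnect_sym //; exact: fconnect_reroute_hub.
case/orP => [Rxy|/andP[Hx Hy]]; last exact: hub2.
case: (boolP (R x p || R x q)) => Hx.
  apply: hub2 => //.
  by case/orP: Hx => H; rewrite Rsym in Rxy; rewrite (Rtrans Rxy H) ?orbT.
by move: Hx; rewrite negb_or => /andP[nxp nxq]; exact: fconnect_reroute_away.
Qed.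

Let rootE u w : (froot f u == froot f w) = R u w.
Proof. by apply: root_connect; exact: fconnect_sym. Qed.

Let Rfp : R (f p) p. Proof. by rewrite Rsym fconnect1. Qed.
Let Rfq : R (f q) q. Proof. by rewrite Rsym fconnect1. Qed.

Definition off_q := [set d in A' | ~~ R d q].

Lemma froots_restrict :
  [set froot f d | d in A] = [set froot f d | d in A'].
Proof.
apply/eqP; rewrite eqEsubset; apply/andP; split; last first.
  by apply: imsetS; apply/subsetP => d; rewrite A'E => /and3P[].
apply/subsetP => _ /imsetP[d dA ->].
have fsym : connect_sym (frel f) := fconnect_sym f_inj.
case: (eqVneq d p) => [->|dp].
  by apply/imsetP; exists (f p) => //; apply/(rootP fsym); rewrite Rsym.
case: (eqVneq d q) => [->|dq].
  by apply/imsetP; exists (f q) => //; apply/(rootP fsym); rewrite Rsym.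
by apply/imsetP; exists d => //; rewrite A'E dA dp dq.
Qed.

Lemma card_froots_off_q :
  #|[set froot f d | d in A']| = #|[set froot f d | d in off_q]| + 1.
Proof.
have -> : [set froot f d | d in A'] = froot f (f q) |: [set froot f d | d in off_q].
  apply/eqP; rewrite eqEsubset; apply/andP; split; apply/subsetP.
    move=> _ /imsetP[d dA' ->]; rewrite !inE.
    case: (boolP (R d q)) => Rdq.
      by rewrite rootE (Rtrans Rdq) // Rsym.
    by apply/orP; right; apply/imsetP; exists d; rewrite // inE dA' Rdq.
  move=> r; rewrite !inE => /orP[/eqP ->|/imsetP[d]].
    by apply/imsetP; exists (f q).
  by rewrite inE => /andP[dA' _] ->; apply/imsetP; exists d.
rewrite cardsU1 addnC; congr (_ + _); apply/eqP; rewrite eqb1.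
apply/imsetP => -[d]; rewrite inE => /andP[_ nRdq] /eqP; rewrite rootE => Rqd.
by move: nRdq; rewrite Rsym in Rqd; rewrite (Rtrans Rqd Rfq).
Qed.

Lemma card_froots_reroute_off_q :
  #|[set froot f' d | d in A']| = #|[set froot f d | d in off_q]|.
Proof.
have rootE' u w : (froot f' u == froot f' w) = fconnect f' u w.
  by apply: root_connect; exact: fconnect_sym.
have -> : [set froot f' d | d in A'] = [set froot f' d | d in off_q].
  apply/eqP; rewrite eqEsubset; apply/andP; split; last first.
    by apply: imsetS; apply/subsetP => d; rewrite inE => /andP[].
  apply/subsetP => _ /imsetP[d dA' ->].
  case: (boolP (R d q)) => Rdq; last by apply/imsetP; exists d; rewrite // inE dA' Rdq.
  have fpB : f p \in off_q.
    by rewrite inE fpA' /=; apply: contra not_fconnect_pq; apply: Rtrans; rewrite Rsym.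
  apply/imsetP; exists (f p) => //; apply/eqP.
  by rewrite rootE' fconnect_rerouteE // /fused Rdq Rfp !orbT.
apply: card_imset_kernel => d1 d2; rewrite !inE => /andP[d1A' n1] /andP[d2A' n2].
rewrite rootE rootE' fconnect_rerouteE // /fused (negbTE n1) (negbTE n2) !orbF.
case: (boolP (R d1 p)) => /= H1; case: (boolP (R d2 p)) => /= H2; rewrite ?orbF ?orbT //.
by rewrite Rsym in H2; rewrite (Rtrans H1 H2).
Qed.

Lemma card_froots_reroute :
  #|[set froot f d | d in A]| = #|[set froot f' d | d in A']| + 1.
Proof.
by rewrite froots_restrict card_froots_off_q card_froots_reroute_off_q.
Qed.

End Reroute.

Section RotationSystem.
Variables (T : finType) (e : rel T) (rot : T -> T -> T).
Hypothesis sg : simple_graph e.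
Hypothesis rs : rotation_system e rot.

Let esym : symmetric e := sg.1.
Let eirr : irreflexive e := sg.2.

Local Notation f := (face_succ e rot).

Lemma face_succE x y : f (x, y) = if e x y then (y, rot y x) else (x, y).
Proof. by []. Qed.

Lemma rot_adj s y : e s y -> e s (rot s y).
Proof. by case: (rs s) => H _ _; exact: H. Qed.

Lemma rot_inj s y z : e s y -> e s z -> rot s y = rot s z -> y = z.
Proof. by case: (rs s) => _ H _ ey ez; exact: H. Qed.

Lemma rot_fconnect s y z : e s y -> e s z -> fconnect (rot s) y z.
Proof. by case: (rs s) => _ _ H; exact: H. Qed.

Lemma rot_fixed_eq s y z : e s y -> rot s y = y -> e s z -> z = y.
Proof.
move=> ey fx ez; have := rot_fconnect ey ez.
by move/iter_findex => <-; rewrite iter_fix.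
Qed.

Lemma face_succ_inj : injective f.
Proof.
move=> [x1 y1] [x2 y2]; rewrite /face_succ /=.
case: ifP => e1; case: ifP => e2 //.
- case=> E1 E2; subst y2; congr pair.
  by apply: (rot_inj (s:=y1) _ _ E2); rewrite esym.
- by case=> E1 E2; move: e2; rewrite -E1 -E2 rot_adj // esym.
- by case=> E1 E2; move: e1; rewrite E1 E2 rot_adj // esym.
Qed.

Lemma face_succ_dart d : d \in darts e -> f d \in darts e.
Proof.
case: d => x y; rewrite !inE /= => exy; rewrite face_succE exy /=.
by apply: rot_adj; rewrite esym.
Qed.

Lemma face3_common_neighbor a b : e a b -> order f (a, b) == 3 ->
  exists x, e a x /\ e b x.
Proof.
move=> eab /eqP o3; have := iter_order face_succ_inj (a, b); rewrite o3.
have eba : e b a by rewrite esym.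
have e1 : e b (rot b a) := rot_adj eba.
have e1' : e (rot b a) b by rewrite esym.
have e2 : e (rot b a) (rot (rot b a) b) := rot_adj e1'.
rewrite /= face_succE eab face_succE e1 face_succE e2; case=> E1 _.
by exists (rot b a); split => //; rewrite esym; move: e2; rewrite E1.
Qed.

(* On a face of length 3 through the dart (a, b), the reverse dart (b, a)
   would have to be one of its three darts, which forces b to have a single
   neighbour. *)
Lemma face3_not_fconnect_rev a b z : e a b -> e b z -> z != a ->
  order f (a, b) == 3 -> ~~ fconnect f (a, b) (b, a).
Proof.
move=> eab ebz za o3.
have eba : e b a by rewrite esym.
have e1 : e b (rot b a) := rot_adj eba.
rewrite fconnect_orbit /orbit (eqP o3) /= !inE.
rewrite face_succE eab face_succE e1 !xpair_eqE.
apply/negP => /or3P[/andP[/eqP ba _]|/andP[_ /eqP ar]|/andP[/eqP br _]].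
- by move: eab; rewrite ba eirr.
- by move: za; rewrite (rot_fixed_eq eba (Logic.eq_sym ar) ebz) eqxx.
- by move: e1; rewrite -br eirr.
Qed.

End RotationSystem.

Section DeleteEdge.
Variables (T : finType) (e : rel T) (rot : T -> T -> T).
Hypothesis sg : simple_graph e.
Variables (u v x : T).
Hypothesis evu : e v u.
Hypothesis eux : e u x.
Hypothesis evx : e v x.

Let esym : symmetric e := sg.1.
Let eirr : irreflexive e := sg.2.

Definition uv_pair a b := ((a == v) && (b == u)) || ((a == u) && (b == v)).
Definition del_edge : rel T := [rel a b | e a b && ~~ uv_pair a b].
Definition del_rot s t :=
  if s == v then excise (rot v) u t
  else if s == u then excise (rot u) v t
  else rot s t.

Lemma neq_adj a b : e a b -> a != b.
Proof. by apply: contraTneq => ->; rewrite eirr. Qed.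

Let uv : u != v. Proof. by rewrite eq_sym neq_adj. Qed.
Let xu : x != u. Proof. by rewrite eq_sym neq_adj. Qed.
Let xv : x != v. Proof. by rewrite eq_sym neq_adj. Qed.

Lemma uv_pair_sym a b : uv_pair a b = uv_pair b a.
Proof. by rewrite /uv_pair orbC; congr orb; rewrite andbC. Qed.

Lemma uv_pair_off a b : a != u -> a != v -> uv_pair a b = false.
Proof. by move=> /negbTE au /negbTE av; rewrite /uv_pair au av. Qed.

Lemma simple_graph_del : simple_graph del_edge.
Proof.
split; first by move=> a b; rewrite /del_edge /= esym uv_pair_sym.
by move=> a; rewrite /del_edge /= eirr.
Qed.

Lemma del_edge_sub a b : del_edge a b -> e a b.
Proof. by case/andP. Qed.

Lemma del_edge_v y : del_edge v y = e v y && (y != u).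
Proof. by rewrite /del_edge /= /uv_pair eqxx /= [v == u]eq_sym (negbTE uv) /= orbF. Qed.

Lemma del_edge_u y : del_edge u y = e u y && (y != v).
Proof. by rewrite /del_edge /= /uv_pair (negbTE uv) eqxx. Qed.

Lemma del_edge_off a y : a != u -> a != v -> del_edge a y = e a y.
Proof. by move=> au av; rewrite /del_edge /= uv_pair_off // andbT. Qed.

Lemma del_edge_of a b : e a b -> ~~ uv_pair a b -> del_edge a b.
Proof. by move=> eab H; rewrite /del_edge /= eab H. Qed.

Lemma del_edge_v_adj y : e v y -> y != u -> del_edge v y.
Proof. by move=> ey yu; rewrite del_edge_v ey yu. Qed.

Lemma del_edge_u_adj y : e u y -> y != v -> del_edge u y.
Proof. by move=> ey yv; rewrite del_edge_u ey yv. Qed.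

Section Rotation.
Hypothesis rs : rotation_system e rot.

Let rot_vu : rot v u != u.
Proof.
apply/negP => /eqP E; have := rot_fixed_eq rs evu E evx.
by move/eqP; rewrite (negbTE xu).
Qed.

Let rot_uv : rot u v != v.
Proof.
have euv : e u v by rewrite esym.
apply/negP => /eqP E; have := rot_fixed_eq rs euv E eux.
by move/eqP; rewrite (negbTE xv).
Qed.

Lemma rotation_at_excise s c : e s c -> rot s c != c ->
  (forall y, del_edge s y = e s y && (y != c)) ->
  [/\ forall y, del_edge s y -> del_edge s (excise (rot s) c y),
      {in [pred y | del_edge s y] &, injective (excise (rot s) c)}
    & forall y z, del_edge s y -> del_edge s z ->
        fconnect (excise (rot s) c) y z].
Proof.
move=> esc rc Ee; split.
- move=> y; rewrite !Ee /excise => /andP[ey yc].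
  case: ifP => [_|/negbT H]; last by rewrite H rot_adj.
  by rewrite rc rot_adj.
- move=> y z; rewrite !inE !Ee /excise => /andP[ey yc] /andP[ez zc].
  case: ifP => [/eqP E1|/negbT N1]; case: ifP => [/eqP E2|/negbT N2].
  + by move=> _; apply: (rot_inj rs ey ez); rewrite E1 E2.
  + move=> E; have := rot_inj rs esc ez E => Ec.
    by move: zc; rewrite -Ec eqxx.
  + move=> E; have := rot_inj rs ey esc E => Ec.
    by move: yc; rewrite Ec eqxx.
  + exact: (rot_inj rs ey ez).
- move=> y z; rewrite !Ee => /andP[ey yc] /andP[ez zc].
  by apply: fconnect_excise => //; exact: (rot_fconnect rs).
Qed.

Lemma rotation_system_del : rotation_system del_edge del_rot.
Proof.
move=> s; rewrite /del_rot.
case: (eqVneq s v) => [->|sv]; first exact: rotation_at_excise del_edge_v.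
case: (eqVneq s u) => [->|su].
  by apply: rotation_at_excise del_edge_u; rewrite // esym.
split.
- by move=> y; rewrite !del_edge_off //; exact: (rot_adj rs).
- by move=> y z; rewrite !inE !del_edge_off //; exact: (rot_inj rs).
- by move=> y z; rewrite !del_edge_off // => ey ez; exact: (rot_fconnect rs).
Qed.

Local Notation f := (face_succ e rot).
Local Notation f' := (face_succ del_edge del_rot).

Lemma darts_del d :
  (d \in darts del_edge) = [&& d \in darts e, d != (v, u) & d != (u, v)].
Proof. by case: d => s t; rewrite !inE /del_edge /= /uv_pair !xpair_eqE negb_or. Qed.

Lemma face_succ_delE d : f' d = if d \in darts del_edge then
   (if f d == (v, u) then f (u, v) else if f d == (u, v) then f (v, u) else f d)
   else d.
Proof.
case: d => s t; rewrite inE /=.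
case: ifP => ed; last by rewrite /face_succ /= ed.
have est : e s t := del_edge_sub ed.
have euv : e u v by rewrite esym.
rewrite /face_succ /= ed est evu euv !xpair_eqE /del_rot /excise.
case: (eqVneq t v) => [->|tv].
  by rewrite /= [v == u]eq_sym (negbTE uv) /=; case: ifP.
case: (eqVneq t u) => [->|tu]; first by case: ifP.
by [].
Qed.

Lemma nfaces_del : ~~ fconnect f (v, u) (u, v) ->
  nfaces e rot = nfaces del_edge del_rot + 1.
Proof.
move=> npq; have euv : e u v by rewrite esym.
apply: (card_froots_reroute (face_succ_inj sg rs)
  (face_succ_inj simple_graph_del rotation_system_del) darts_del
  (@face_succ_dart _ _ _ sg rs) face_succ_delE npq).
- rewrite darts_del /face_succ /= evu !xpair_eqE (negbTE uv) eqxx /=.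
  by rewrite rot_uv andbT inE /= rot_adj // esym.
- rewrite darts_del /face_succ /= euv !xpair_eqE eqxx /= [v == u]eq_sym.
  by rewrite (negbTE uv) rot_vu andbT inE /= rot_adj.
Qed.

End Rotation.

Lemma del_edge_ux : del_edge u x.
Proof. by rewrite del_edge_u eux xv. Qed.

Lemma del_edge_vx : del_edge v x.
Proof. by rewrite del_edge_v evx xu. Qed.

Lemma nedges_del : nedges e = nedges del_edge + 1.
Proof.
rewrite /nedges.
have -> : darts del_edge = (darts e :\ (v, u)) :\ (u, v).
  apply/setP => d; rewrite darts_del !inE.
  by case: (e d.1 d.2); case: (d == (v, u)); case: (d == (u, v)).
have vuD : (v, u) \in darts e by rewrite inE.
have uvD : (u, v) \in darts e :\ (v, u).
  by rewrite !inE /= esym evu xpair_eqE (negbTE uv).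
rewrite (cardsD1 (v, u) (darts e)) vuD (cardsD1 (u, v)) uvD.
rewrite add1n add1n -addn2 addnC.
by rewrite -[2 + _]/(1 * 2 + _) divnMDl // addnC.
Qed.

(* The deleted edge is bypassed through the common neighbour [x]. *)
Lemma connect_del : connect e =2 connect del_edge.
Proof.
have exu : del_edge x u by rewrite del_edge_off // esym.
have exv : del_edge x v by rewrite del_edge_off // esym.
move=> a b; apply/idP/idP; last by apply: connect_sub => a' b' /del_edge_sub /connect1.
apply: connect_sub => a' b' eab.
case: (boolP (uv_pair a' b')) => H; last by apply: connect1; rewrite /del_edge /= eab H.
case/orP: H => /andP[/eqP -> /eqP ->].
  exact: connect_trans (connect1 del_edge_vx) (connect1 exu).
exact: connect_trans (connect1 del_edge_ux) (connect1 exv).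
Qed.

Lemma ncomp_del : ncomp e = ncomp del_edge.
Proof.
have E : root e =1 root del_edge by move=> a; rewrite /root (eq_pick (connect_del a)).
by rewrite /ncomp (eq_imset _ E).
Qed.

Lemma nisolated_del : nisolated e = nisolated del_edge.
Proof.
rewrite /nisolated; apply: eq_card => a; rewrite !inE.
case: (eqVneq a u) => [->|au].
  by apply/idP/idP => /forallP /(_ x); rewrite ?eux ?del_edge_ux.
case: (eqVneq a v) => [->|av].
  by apply/idP/idP => /forallP /(_ x); rewrite ?evx ?del_edge_vx.
by apply: eq_forallb => y; rewrite del_edge_off.
Qed.

Lemma deg_del_le a : deg del_edge a <= deg e a.
Proof. by apply: subset_leq_card; apply/subsetP => y; rewrite !inE => /del_edge_sub. Qed.

Lemma has_4fan_del : has_4fan del_edge -> has_4fan e.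
Proof.
move=> [c [u1 [u2 [u3 [u4 [u5 H]]]]]]; exists c, u1, u2, u3, u4, u5.
case/and5P: H => H1 /del_edge_sub H2 /del_edge_sub H3 /del_edge_sub H4.
case/and5P => /del_edge_sub H5 /del_edge_sub H6 /del_edge_sub H7 /del_edge_sub H8.
case/andP => /del_edge_sub H9 /del_edge_sub H10.
by apply/and5P; split => //; apply/and5P; split => //; apply/andP.
Qed.

Lemma planar_rotation_del : planar_rotation e rot ->
  ~~ fconnect (face_succ e rot) (v, u) (u, v) ->
  planar_rotation del_edge del_rot.
Proof.
move=> [rs euler] npq; split; first exact: rotation_system_del.
move: euler; rewrite (nfaces_del rs npq) nedges_del ncomp_del nisolated_del.
by lia.
Qed.

End DeleteEdge.

Definition compat (a b : option 'I_9) : bool :=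
  if a is Some x then (if b is Some y then x != y else true) else true.

Lemma compat_sym a b : compat a b = compat b a.
Proof. by case: a => [x|]; case: b => [y|] //=; rewrite eq_sym. Qed.

Lemma compat_some x y : compat (Some x) (Some y) = (x != y).
Proof. by []. Qed.

Lemma exists_color_notin (F : {set 'I_9}) : #|F| <= 8 -> exists c, c \notin F.
Proof.
move=> F8; have : 0 < #|~: F| by have := cardsC F; rewrite card_ord; lia.
by case/card_gt0P => c; rewrite inE; exists c.
Qed.

Section PartialColoring.
Variables (T : finType) (e : rel T).
Hypothesis sg : simple_graph e.
Let esym : symmetric e := sg.1.
Let eirr : irreflexive e := sg.2.

(* [None] marks an uncoloured vertex or edge. *)
Definition partial_coloring (cv : T -> option 'I_9) (ce : T -> T -> option 'I_9) :=
 [/\ forall x y, e x y -> ce x y = ce y x,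
     forall x y, e x y -> compat (cv x) (cv y),
     forall x y z, e x y -> e x z -> y != z -> compat (ce x y) (ce x z)
   & forall x y, e x y -> compat (ce x y) (cv x)].

Definition set_edge_color (s t : T) o (ce : T -> T -> option 'I_9) :=
  fun x y => if ((x == s) && (y == t)) || ((x == t) && (y == s)) then o else ce x y.

Definition set_vertex_color (s : T) o (cv : T -> option 'I_9) :=
  fun x => if x == s then o else cv x.

Lemma set_edge_color_sym_cond (s t x y : T) :
  ((x == s) && (y == t)) || ((x == t) && (y == s)) =
  ((y == s) && (x == t)) || ((y == t) && (x == s)).
Proof. by rewrite orbC andbC; congr orb; rewrite andbC. Qed.

Lemma set_edge_color_offl s t o ce a b :
  a != s -> a != t -> set_edge_color s t o ce a b = ce a b.
Proof. by move=> /negbTE H1 /negbTE H2; rewrite /set_edge_color H1 H2. Qed.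

Lemma set_edge_color_offr s t o ce a b :
  b != s -> b != t -> set_edge_color s t o ce a b = ce a b.
Proof. by move=> /negbTE H1 /negbTE H2; rewrite /set_edge_color H1 H2 !andbF. Qed.

Lemma set_edge_color_st s t o ce : set_edge_color s t o ce s t = o.
Proof. by rewrite /set_edge_color !eqxx. Qed.

Lemma set_edge_color_ts s t o ce : set_edge_color s t o ce t s = o.
Proof. by rewrite /set_edge_color !eqxx orbT. Qed.

Lemma set_vertex_color_off s o cv a : a != s -> set_vertex_color s o cv a = cv a.
Proof. by move=> /negbTE H; rewrite /set_vertex_color H. Qed.

Lemma deg3_third_neighbor s a b : deg e s = 3 -> e s a -> e s b -> a != b ->
  exists c, [/\ e s c, c != a, c != b &
     forall y, e s y -> [|| y == a, y == b | y == c]].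
Proof.
move=> d3 ea eb ab.
have : #|([set y | e s y] :\ a) :\ b| == 1.
  have ina : a \in [set y | e s y] by rewrite inE.
  have inb : b \in [set y | e s y] :\ a by rewrite !inE eb eq_sym ab.
  have c3 : #|[set y | e s y]| = 3 by rewrite -d3; apply: eq_card => y; rewrite inE.
  have := cardsD1 a [set y | e s y]; have := cardsD1 b ([set y | e s y] :\ a).
  by rewrite ina inb c3; lia.
case/cards1P => c Ec.
have : c \in [set c] by rewrite inE.
rewrite -Ec !inE => /and3P[cb ca ec].
exists c; split => // y ey.
case: (eqVneq y a) => //= ya; case: (eqVneq y b) => //= yb.
have : y \in [set c] by rewrite -Ec !inE ya yb ey.
by rewrite inE => ->.
Qed.

Lemma partial_coloring_uncolor_vertex cv ce s :
  partial_coloring cv ce -> partial_coloring (set_vertex_color s None cv) ce.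
Proof.
case=> H1 H2 H3 H4; split => //.
- move=> x y exy; rewrite /set_vertex_color; case: ifP => _ //; case: ifP => _.
    by case: (cv x).
  exact: H2.
- move=> x y exy; rewrite /set_vertex_color; case: ifP => _; first by case: (ce x y).
  exact: H4.
Qed.

Lemma partial_coloring_uncolor_edge cv ce s t :
  partial_coloring cv ce -> partial_coloring cv (set_edge_color s t None ce).
Proof.
case=> H1 H2 H3 H4; split => //.
- move=> x y exy; rewrite /set_edge_color set_edge_color_sym_cond.
  by case: ifP => //; rewrite H1.
- move=> x y z exy exz yz; rewrite /set_edge_color; case: ifP => // _.
  by case: ifP => _; [case: (ce x y) | exact: H3].
- by move=> x y exy; rewrite /set_edge_color; case: ifP => // _; exact: H4.
Qed.

Lemma partial_coloring_color_vertex cv ce s c : partial_coloring cv ce ->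
  (forall y, e s y -> compat (Some c) (cv y)) ->
  (forall y, e s y -> compat (ce s y) (Some c)) ->
  partial_coloring (set_vertex_color s (Some c) cv) ce.
Proof.
case=> H1 H2 H3 H4 Hv He; split => //.
- move=> x y exy; rewrite /set_vertex_color.
  case: (eqVneq x s) => [xs|xs]; case: (eqVneq y s) => [ys|ys].
  + by move: exy; rewrite xs ys eirr.
  + by subst x; exact: Hv.
  + by subst y; rewrite compat_sym; apply: Hv; rewrite esym.
  + exact: H2.
- move=> x y exy; rewrite /set_vertex_color.
  by case: (eqVneq x s) => [xs|xs]; [subst x; exact: He | exact: H4].
Qed.

Lemma partial_coloring_color_edge cv ce s t c : partial_coloring cv ce -> e s t ->
  compat (Some c) (cv s) -> compat (Some c) (cv t) ->
  (forall y, e s y -> y != t -> compat (ce s y) (Some c)) ->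
  (forall y, e t y -> y != s -> compat (ce t y) (Some c)) ->
  partial_coloring cv (set_edge_color s t (Some c) ce).
Proof.
case=> H1 H2 H3 H4 est Hs Ht Es Et.
have st : s != t by apply: contraTneq est => ->; rewrite eirr.
split => //.
- move=> x y exy; rewrite /set_edge_color set_edge_color_sym_cond.
  by case: ifP => //; rewrite H1.
- move=> x y z exy exz yz; rewrite /set_edge_color.
  case: (boolP (((x == s) && (y == t)) || ((x == t) && (y == s)))) => Ky;
  case: (boolP (((x == s) && (z == t)) || ((x == t) && (z == s)))) => Kz.
  + exfalso.
    case/orP: Ky => /andP[/eqP xs /eqP yt]; case/orP: Kz => /andP[/eqP xs' /eqP zt].
    * by move: yz; rewrite yt zt eqxx.
    * by move: st; rewrite -xs xs' eqxx.
    * by move: st; rewrite -xs xs' eqxx.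
    * by move: yz; rewrite yt zt eqxx.
  + rewrite compat_sym.
    by case/orP: Ky => /andP[/eqP xs /eqP yt]; subst x y;
      [apply: Es | apply: Et]; rewrite // eq_sym.
  + by case/orP: Kz => /andP[/eqP xs /eqP zt]; subst x z; [exact: Es | exact: Et].
  + exact: H3.
- move=> x y exy; rewrite /set_edge_color.
  by case: ifP => [/orP[]/andP[/eqP-> _]//|_]; exact: H4.
Qed.

(* A vertex of degree at most 4 sees at most 8 colours: on its neighbours and
   on its incident edges. *)
Lemma exists_vertex_color cv ce s : deg e s <= 4 ->
  exists c, (forall y, e s y -> compat (Some c) (cv y)) /\
            (forall y, e s y -> compat (ce s y) (Some c)).
Proof.
move=> dg.
set N := [set y | e s y].
set F := [set odflt ord0 (cv y) | y in N] :|: [set odflt ord0 (ce s y) | y in N].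
have cN : #|N| = deg e s by apply: eq_card => y; rewrite inE.
have cF : #|F| <= 8.
  apply: leq_trans (leq_card_setU _ _) _.
  have := leq_imset_card (fun y => odflt ord0 (cv y)) N.
  have := leq_imset_card (fun y => odflt ord0 (ce s y)) N.
  by rewrite cN; lia.
case: (exists_color_notin cF) => c cF'.
exists c; split => y ey.
- case Ey : (cv y) => [d|] //=; apply: contraNneq cF' => ->.
  by rewrite inE; apply/orP; left; apply/imsetP; exists y; rewrite ?inE ?Ey.
- case Ey : (ce s y) => [d|] //=; apply: contraNneq cF' => <-.
  by rewrite inE; apply/orP; right; apply/imsetP; exists y; rewrite ?inE ?Ey.
Qed.

Lemma exists_edge_color cv ce s t : deg e s + deg e t <= 6 ->
  exists c, [/\ compat (Some c) (cv s), compat (Some c) (cv t),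
            (forall y, e s y -> compat (ce s y) (Some c)) &
            (forall y, e t y -> compat (ce t y) (Some c))].
Proof.
move=> dg.
set Ns := [set y | e s y].
set Nt := [set y | e t y].
set Fv := odflt ord0 (cv s) |: [set odflt ord0 (cv t)].
set Fs := [set odflt ord0 (ce s y) | y in Ns].
set Ft := [set odflt ord0 (ce t y) | y in Nt].
have cNs : #|Ns| = deg e s by apply: eq_card => y; rewrite inE.
have cNt : #|Nt| = deg e t by apply: eq_card => y; rewrite inE.
have cF : #|Fv :|: (Fs :|: Ft)| <= 8.
  have := leq_of_leqif (leq_card_setU Fv (Fs :|: Ft)).
  have := leq_of_leqif (leq_card_setU Fs Ft).
  have := leq_of_leqif (leq_card_setU [set odflt ord0 (cv s)] [set odflt ord0 (cv t)]).
  have := leq_imset_card (fun y => odflt ord0 (ce s y)) Ns.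
  have := leq_imset_card (fun y => odflt ord0 (ce t y)) Nt.
  by rewrite !cards1 cNs cNt /Fv /Fs /Ft; lia.
case: (exists_color_notin cF) => c cF'.
exists c; split.
- case Ey : (cv s) => [d|] //=; apply: contraNneq cF' => ->.
  by rewrite !inE Ey eqxx.
- case Ey : (cv t) => [d|] //=; apply: contraNneq cF' => ->.
  by rewrite !inE Ey eqxx orbT.
- move=> y ey; case Ey : (ce s y) => [d|] //=; apply: contraNneq cF' => <-.
  rewrite !inE; apply/orP; right; apply/orP; left.
  by apply/imsetP; exists y; rewrite ?inE ?Ey.
- move=> y ey; case Ey : (ce t y) => [d|] //=; apply: contraNneq cF' => <-.
  rewrite !inE; apply/orP; right; apply/orP; right.
  by apply/imsetP; exists y; rewrite ?inE ?Ey.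
Qed.

Lemma partial_coloring_total cv ce : partial_coloring cv ce ->
  (forall x, cv x != None) -> (forall x y, e x y -> ce x y != None) ->
  total9_colorable e.
Proof.
case=> H1 H2 H3 H4 Fv Fe.
exists (fun x => odflt ord0 (cv x)), (fun x y => odflt ord0 (ce x y)); split.
- by move=> x y exy; rewrite H1.
- move=> x y exy; have := H2 _ _ exy.
  by case: (cv x) (Fv x) => // a _; case: (cv y) (Fv y).
- move=> x y z exy exz yz; have := H3 _ _ _ exy exz yz.
  by case: (ce x y) (Fe _ _ exy) => // a _; case: (ce x z) (Fe _ _ exz).
- move=> x y exy; have := H4 _ _ exy.
  by case: (ce x y) (Fe _ _ exy) => // a _; case: (cv x) (Fv x).
Qed.

End PartialColoring.

Section Recolor.
Variables (T : finType) (e : rel T).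
Hypothesis sg : simple_graph e.
Let esym : symmetric e := sg.1.
Variables (u v w : T).
Hypothesis evu : e v u.
Hypothesis evw : e v w.
Hypothesis wu : w != u.
Hypothesis du : deg e u = 3.
Hypothesis dw : deg e w = 3.
Hypothesis dv : deg e v = 7.
Variables (cv0 : T -> 'I_9) (ce0 : T -> T -> 'I_9).
Local Notation e' := (del_edge e u v).
Hypothesis ce0_sym : forall a b, e' a b -> ce0 a b = ce0 b a.
Hypothesis cv0_adj : forall a b, e' a b -> cv0 a != cv0 b.
Hypothesis ce0_adj : forall a b c, e' a b -> e' a c -> b != c -> ce0 a b != ce0 a c.
Hypothesis ce0_cv0 : forall a b, e' a b -> ce0 a b != cv0 a.

Let adj_neq := neq_adj sg.
Let uv : u != v. Proof. by rewrite eq_sym adj_neq. Qed.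
Let vu : v != u. Proof. exact: adj_neq. Qed.
Let wv : w != v. Proof. by rewrite eq_sym adj_neq. Qed.
Let vw : v != w. Proof. exact: adj_neq. Qed.
Let uw : u != w. Proof. by rewrite eq_sym. Qed.
Let euv : e u v. Proof. by rewrite esym. Qed.

(* The colouring of [G - uv] with [u], [w] and the edge [uv] uncoloured;
   [u] and [w] have degree 3, so they can always be recoloured last. *)
Definition cv_init :=
  set_vertex_color w None (set_vertex_color u None (fun a => Some (cv0 a))).
Definition ce_init := set_edge_color v u None (fun a b => Some (ce0 a b)).

Lemma ce_initE a b : ce_init a b = if uv_pair u v a b then None else Some (ce0 a b).
Proof. by []. Qed.

Lemma cv_init_off a : a != u -> a != w -> cv_init a = Some (cv0 a).
Proof. by move=> au aw; rewrite /cv_init !set_vertex_color_off. Qed.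

Lemma cv_init_u : cv_init u = None.
Proof. by rewrite /cv_init set_vertex_color_off // /set_vertex_color eqxx. Qed.

Lemma cv_init_w : cv_init w = None.
Proof. by rewrite /cv_init /set_vertex_color eqxx. Qed.

Lemma ce_init_v y : y != u -> ce_init v y = Some (ce0 v y).
Proof. by move=> yu; rewrite ce_initE /uv_pair eqxx (negbTE yu) (negbTE vu). Qed.

Lemma ce_init_u y : y != v -> ce_init u y = Some (ce0 u y).
Proof. by move=> yv; rewrite ce_initE /uv_pair eqxx (negbTE yv) (negbTE uv). Qed.

Lemma ce_init_off a b : a != u -> a != v -> ce_init a b = Some (ce0 a b).
Proof. by move=> au av; rewrite ce_initE uv_pair_off. Qed.

Lemma ce_init_vu : ce_init v u = None.
Proof. exact: set_edge_color_st. Qed.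

Lemma ce_init_uv : ce_init u v = None.
Proof. exact: set_edge_color_ts. Qed.

Lemma partial_coloring_init : partial_coloring e cv_init ce_init.
Proof.
have uv_pair_u a b : uv_pair u v a b -> (a == u) || (b == u).
  by case/orP => /andP[] => [_ ->|-> _]; rewrite ?orbT.
apply: partial_coloring_uncolor_vertex; split.
- move=> a b eab; rewrite !ce_initE uv_pair_sym; case: ifP => // H.
  by rewrite ce0_sym //; apply: del_edge_of => //; rewrite uv_pair_sym H.
- move=> a b eab; rewrite /set_vertex_color.
  case: (eqVneq a u) => // au; case: (eqVneq b u) => [//|bu].
  rewrite compat_some; apply: cv0_adj; apply: del_edge_of => //.
  by apply/negP => /uv_pair_u; rewrite (negbTE au) (negbTE bu).
- move=> a b c eab eac bc; rewrite !ce_initE.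
  case: ifP => // H1; case: ifP => H2; first by [].
  by rewrite compat_some; apply: ce0_adj; rewrite // del_edge_of ?H1 ?H2.
- move=> a b eab; rewrite ce_initE; case: ifP => // H; rewrite /set_vertex_color.
  case: (eqVneq a u) => // au.
  by rewrite compat_some; apply: ce0_cv0; apply: del_edge_of => //; rewrite H.
Qed.

Lemma complete_coloring ce : partial_coloring e cv_init ce ->
  (forall a b, e a b -> ce a b != None) -> total9_colorable e.
Proof.
move=> P colored.
have du4 : deg e u <= 4 by rewrite du.
have dw4 : deg e w <= 4 by rewrite dw.
have [cu [Hu1 Hu2]] := exists_vertex_color cv_init ce du4.
have P1 := partial_coloring_color_vertex sg P Hu1 Hu2.
have [cw [Hw1 Hw2]] := exists_vertex_color (set_vertex_color u (Some cu) cv_init) ce dw4.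
have P2 := partial_coloring_color_vertex sg P1 Hw1 Hw2.
apply: (partial_coloring_total P2) => // a.
rewrite /set_vertex_color; case: ifP => // aw; case: ifP => // au.
by rewrite cv_init_off //; apply/negbT.
Qed.

Definition vcolors := [set ce0 v y | y in [set y | e v y && (y != u)]].

Lemma vcolors_in y : e v y -> y != u -> ce0 v y \in vcolors.
Proof. by move=> ey yu; apply/imsetP; exists y; rewrite // inE ey yu. Qed.

Lemma card_vcolors : #|vcolors| <= 6.
Proof.
apply: leq_trans (leq_imset_card _ _) _.
have -> : [set y | e v y && (y != u)] = [set y | e v y] :\ u.
  by apply/setP => y; rewrite !inE andbC.
have := cardsD1 u [set y | e v y]; rewrite inE evu.
have -> : #|[set y | e v y]| = 7 by rewrite -dv; apply: eq_card => y; rewrite inE.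
by lia.
Qed.

Lemma notin_vcolors_neq a a' : a \notin vcolors -> a' \in vcolors -> a != a'.
Proof. by move=> H1 H2; apply: contraNneq H1 => ->. Qed.

Definition free_at_v c := (c != cv0 v) && (c \notin vcolors).

Lemma exists_free_at_v k : exists c, free_at_v c && (c != k).
Proof.
have : #|cv0 v |: (k |: vcolors)| <= 8.
  apply: leq_trans (leq_card_setU _ _) _; rewrite cards1.
  apply: leq_trans (leq_add (leqnn 1) (leq_card_setU _ _)) _; rewrite cards1.
  by have := card_vcolors; lia.
case/exists_color_notin => c; rewrite !inE !negb_or => /and3P[H1 H2 H3].
by exists c; rewrite /free_at_v H1 H2 H3.
Qed.

Lemma colorable_adj_uw : e u w -> total9_colorable e.
Proof.
move=> euw.
have [z [euz zv zw Nu]] := deg3_third_neighbor du euv euw vw.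
have zu : z != u by rewrite eq_sym adj_neq.
have [c /andP[/andP[cv cV] cz]] := exists_free_at_v (ce0 u z).
pose ce1 := set_edge_color u w None ce_init.
have P1 : partial_coloring e cv_init ce1.
  exact: partial_coloring_uncolor_edge partial_coloring_init.
pose ce2 := set_edge_color v u (Some c) ce1.
have P2 : partial_coloring e cv_init ce2.
  apply: (partial_coloring_color_edge sg P1 evu).
  - by rewrite cv_init_off // compat_some.
  - by rewrite cv_init_u.
  - move=> y ey yu; rewrite /ce1 set_edge_color_offl // ce_init_v // compat_some.
    by rewrite eq_sym; apply: notin_vcolors_neq => //; exact: vcolors_in.
  - move=> y ey yv; rewrite /ce1.
    case/or3P: (Nu _ ey) => /eqP Ey; first by rewrite Ey eqxx in yv.
      by rewrite Ey set_edge_color_st.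
    by rewrite Ey set_edge_color_offr // ce_init_u // compat_some eq_sym.
have dd : deg e u + deg e w <= 6 by rewrite du dw.
have [c' [d1 d2 d3 d4]] := exists_edge_color cv_init ce2 dd.
pose ce3 := set_edge_color u w (Some c') ce2.
have P3 : partial_coloring e cv_init ce3.
  by apply: (partial_coloring_color_edge sg P2 euw) => // y ey _; [exact: d3|exact: d4].
apply: (complete_coloring P3) => a b eab.
rewrite /ce3 /set_edge_color; case: ifP => // H1.
rewrite /ce2 /set_edge_color; case: ifP => // H2.
by rewrite /ce1 /set_edge_color H1 ce_initE /uv_pair H2.
Qed.

Section NonAdjacent.
Variables x z : T.
Hypothesis eux : e u x.
Hypothesis evx : e v x.
Hypothesis nuw : ~~ e u w.
Hypothesis euz : e u z.
Hypothesis zv : z != v.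
Hypothesis zx : z != x.
Hypothesis Nu : forall y, e u y -> [|| y == v, y == x | y == z].

Let xu : x != u. Proof. by rewrite eq_sym adj_neq. Qed.
Let xv : x != v. Proof. by rewrite eq_sym adj_neq. Qed.
Let zu : z != u. Proof. by rewrite eq_sym adj_neq. Qed.
Let ux : u != x. Proof. by rewrite eq_sym. Qed.
Let vx : v != x. Proof. by rewrite eq_sym. Qed.
Let xw : x != w. Proof. by apply: contraNneq nuw => <-. Qed.
Let wx : w != x. Proof. by rewrite eq_sym. Qed.
Let zw : z != w. Proof. by apply: contraNneq nuw => <-. Qed.
Let xz : x != z. Proof. by rewrite eq_sym. Qed.

Lemma colorable_free c : free_at_v c -> c != ce0 u x -> c != ce0 u z ->
  total9_colorable e.
Proof.
case/andP=> cv cV cx cz.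
pose ce2 := set_edge_color v u (Some c) ce_init.
have P2 : partial_coloring e cv_init ce2.
  apply: (partial_coloring_color_edge sg partial_coloring_init evu).
  - by rewrite cv_init_off // compat_some.
  - by rewrite cv_init_u.
  - move=> y ey yu; rewrite ce_init_v // compat_some.
    by rewrite eq_sym; apply: notin_vcolors_neq => //; exact: vcolors_in.
  - move=> y ey yv; rewrite ce_init_u // compat_some.
    by case/or3P: (Nu ey) => /eqP Ey; rewrite Ey ?eqxx // in yv *; rewrite eq_sym.
apply: (complete_coloring P2) => a b eab.
rewrite /ce2 /set_edge_color; case: ifP => // H1.
by rewrite ce_initE /uv_pair H1.
Qed.

Lemma colorable_unless_free_ux_uz :
  (free_at_v (ce0 u x) -> free_at_v (ce0 u z) -> total9_colorable e) ->
  total9_colorable e.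
Proof.
move=> H.
have [c1 /andP[f1 c1z]] := exists_free_at_v (ce0 u z).
case: (eqVneq c1 (ce0 u x)) => [E1|c1x]; last exact: colorable_free f1 c1x c1z.
have [c2 /andP[f2 c2x]] := exists_free_at_v (ce0 u x).
case: (eqVneq c2 (ce0 u z)) => [E2|c2z]; last exact: colorable_free f2 c2x c2z.
by apply: H; rewrite -?E1 -?E2.
Qed.

Hypothesis free_ux : free_at_v (ce0 u x).
Hypothesis free_uz : free_at_v (ce0 u z).

Let ux_notin : ce0 u x \notin vcolors. Proof. by case/andP: free_ux. Qed.
Let uz_notin : ce0 u z \notin vcolors. Proof. by case/andP: free_uz. Qed.

(* [vw] takes a colour [c] free at [v] and missing at [w]; [vu] takes the
   old colour of [vw], which is not free at [v], hence differs from [ux], [uz]. *)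
Lemma colorable_shift c : free_at_v c ->
  (forall y, e w y -> y != v -> ce0 w y != c) -> total9_colorable e.
Proof.
case/andP=> cv cV missing_w.
have vwV : ce0 v w \in vcolors by apply: vcolors_in.
pose ce2 := set_edge_color v w (Some c) ce_init.
have P2 : partial_coloring e cv_init ce2.
  apply: (partial_coloring_color_edge sg partial_coloring_init evw).
  - by rewrite cv_init_off // compat_some.
  - by rewrite cv_init_w.
  - move=> y ey yw; case: (eqVneq y u) => [->|yu]; first by rewrite ce_init_vu.
    rewrite ce_init_v // compat_some eq_sym.
    by apply: notin_vcolors_neq => //; exact: vcolors_in.
  - by move=> y ey yv; rewrite ce_init_off // compat_some missing_w.
pose ce3 := set_edge_color v u (Some (ce0 v w)) ce2.
have P3 : partial_coloring e cv_init ce3.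
  apply: (partial_coloring_color_edge sg P2 evu).
  - by rewrite cv_init_off // compat_some ce0_cv0 // del_edge_v_adj.
  - by rewrite cv_init_u.
  - move=> y ey yu; case: (eqVneq y w) => [->|yw].
      by rewrite /ce2 set_edge_color_st compat_some; apply: notin_vcolors_neq.
    rewrite /ce2 set_edge_color_offr //; last by rewrite eq_sym; exact: adj_neq.
    by rewrite ce_init_v // compat_some ce0_adj // del_edge_v_adj.
  - move=> y ey yv; rewrite /ce2 set_edge_color_offl // ce_init_u // compat_some.
    by case/or3P: (Nu ey) => /eqP Ey; rewrite Ey ?eqxx // in yv *;
      apply: notin_vcolors_neq.
apply: (complete_coloring P3) => a b eab.
rewrite /ce3 /set_edge_color; case: ifP => // H1.
rewrite /ce2 /set_edge_color; case: ifP => // H2.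
by rewrite ce_initE /uv_pair H1.
Qed.

Let ux_neq_uz : ce0 u x != ce0 u z.
Proof. by apply: ce0_adj => //; apply: del_edge_u_adj. Qed.

Lemma colorable_unless_w_sees_ux_uz :
  ((forall y, e w y -> y != v -> (ce0 w y == ce0 u x) || (ce0 w y == ce0 u z)) ->
    total9_colorable e) -> total9_colorable e.
Proof.
move=> H.
case: (pickP [pred y | e w y && (y != v) && (ce0 w y == ce0 u x)]) =>
  [yb /andP[/andP[ewb ybv] /eqP Eb] | Hnb]; last first.
  by apply: (colorable_shift free_ux) => y ey yv; have := Hnb y; rewrite /= ey yv => /negbT.
case: (pickP [pred y | e w y && (y != v) && (ce0 w y == ce0 u z)]) =>
  [yc /andP[/andP[ewc ycv] /eqP Ec] | Hnc]; last first.
  by apply: (colorable_shift free_uz) => y ey yv; have := Hnc y; rewrite /= ey yv => /negbT.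
have ewv : e w v by rewrite esym.
have vyb : v != yb by rewrite eq_sym.
have [c' [ewc' c'v c'b Nw]] := deg3_third_neighbor dw ewv ewb vyb.
have ycb : yc != yb by apply: contraNneq ux_neq_uz => E; rewrite -Eb -Ec E.
have Ec' : yc = c'.
  by case/or3P: (Nw _ ewc) => /eqP // E; rewrite E eqxx in ycv ycb.
apply: H => y ey yv; case/or3P: (Nw _ ey) => /eqP Ey; first by rewrite Ey eqxx in yv.
  by rewrite Ey Eb eqxx.
by rewrite Ey -Ec' Ec eqxx orbT.
Qed.

Let del_edge_xE a : e x a -> e' x a.
Proof. by move=> exa; rewrite del_edge_off. Qed.

Definition ce_swap :=
  set_edge_color v x (Some (ce0 u x))
    (set_edge_color u x (Some (ce0 v x)) (set_edge_color v x None ce_init)).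

Lemma partial_coloring_swap : partial_coloring e cv_init ce_swap.
Proof.
have vxV : ce0 v x \in vcolors by apply: vcolors_in.
have Exv : ce0 v x = ce0 x v by apply: ce0_sym; apply: del_edge_v_adj.
have Exu : ce0 u x = ce0 x u by apply: ce0_sym; apply: del_edge_u_adj.
pose ce2 := set_edge_color v x None ce_init.
have P2 : partial_coloring e cv_init ce2.
  exact: partial_coloring_uncolor_edge partial_coloring_init.
pose ce3 := set_edge_color u x (Some (ce0 v x)) ce2.
have P3 : partial_coloring e cv_init ce3.
  apply: (partial_coloring_color_edge sg P2 eux).
  - by rewrite cv_init_u.
  - by rewrite cv_init_off // compat_some Exv ce0_cv0 // del_edge_xE // esym.
  - move=> y ey yx; rewrite /ce2 set_edge_color_offl //.
    case/or3P: (Nu ey) => /eqP Ey; first by rewrite Ey ce_init_uv.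
      by rewrite Ey eqxx in yx.
    by rewrite Ey ce_init_u // compat_some; apply: notin_vcolors_neq.
  - move=> y ey yu; case: (eqVneq y v) => [->|yv].
      by rewrite /ce2 set_edge_color_ts.
    have yx : y != x by rewrite eq_sym; exact: adj_neq.
    rewrite /ce2 set_edge_color_offr // ce_init_off // compat_some Exv.
    by apply: ce0_adj; rewrite // del_edge_xE // esym.
rewrite /ce_swap -/ce2 -/ce3.
apply: (partial_coloring_color_edge sg P3 evx).
- by rewrite cv_init_off // compat_some; case/andP: free_ux.
- by rewrite cv_init_off // compat_some Exu ce0_cv0 // del_edge_xE // esym.
- move=> y ey yx.
  have yv : y != v by rewrite eq_sym; exact: adj_neq.
  rewrite /ce3 set_edge_color_offl // /ce2 set_edge_color_offr //.
  case: (eqVneq y u) => [->|yu]; first by rewrite ce_init_vu.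
  rewrite ce_init_v // compat_some eq_sym.
  by apply: notin_vcolors_neq => //; exact: vcolors_in.
- move=> y ey yv; case: (eqVneq y u) => [->|yu].
    by rewrite /ce3 set_edge_color_ts compat_some eq_sym; apply: notin_vcolors_neq.
  have yx : y != x by rewrite eq_sym; exact: adj_neq.
  rewrite /ce3 set_edge_color_offr // /ce2 set_edge_color_offr // ce_init_off //.
  by rewrite compat_some Exu; apply: ce0_adj; rewrite // del_edge_xE // esym.
Qed.

Hypothesis w_sees :
  forall y, e w y -> y != v -> (ce0 w y == ce0 u x) || (ce0 w y == ce0 u z).

Let vxV : ce0 v x \in vcolors. Proof. exact: vcolors_in. Qed.
Let vwV : ce0 v w \in vcolors. Proof. exact: vcolors_in. Qed.

(* After the swap, [vw] takes the old colour of [vx]: it is free at [w],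
   whose other edges carry the colours of [ux] and [uz]. *)
Definition ce_rotate := set_edge_color v w (Some (ce0 v x)) ce_swap.

Lemma partial_coloring_rotate : partial_coloring e cv_init ce_rotate.
Proof.
apply: (partial_coloring_color_edge sg partial_coloring_swap evw).
- by rewrite cv_init_off // compat_some ce0_cv0 // del_edge_v_adj.
- by rewrite cv_init_w.
- move=> y ey yw; rewrite /ce_swap; case: (eqVneq y x) => [->|yx].
    by rewrite set_edge_color_st compat_some; apply: notin_vcolors_neq.
  have yv : y != v by rewrite eq_sym; exact: adj_neq.
  rewrite set_edge_color_offr // set_edge_color_offl // set_edge_color_offr //.
  case: (eqVneq y u) => [->|yu]; first by rewrite ce_init_vu.
  by rewrite ce_init_v // compat_some ce0_adj // del_edge_v_adj.
- move=> y ey yv; rewrite /ce_swap !set_edge_color_offl // ce_init_off //.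
  by rewrite compat_some; case/orP: (w_sees ey yv) => /eqP ->; apply: notin_vcolors_neq.
Qed.

Lemma colorable_rotate : total9_colorable e.
Proof.
pose ce6 := set_edge_color v u (Some (ce0 v w)) ce_rotate.
have P6 : partial_coloring e cv_init ce6.
  apply: (partial_coloring_color_edge sg partial_coloring_rotate evu).
  - by rewrite cv_init_off // compat_some ce0_cv0 // del_edge_v_adj.
  - by rewrite cv_init_u.
  - move=> y ey yu; rewrite /ce_rotate; case: (eqVneq y w) => [->|yw].
      by rewrite set_edge_color_st compat_some ce0_adj // del_edge_v_adj.
    have yv : y != v by rewrite eq_sym; exact: adj_neq.
    rewrite set_edge_color_offr // /ce_swap; case: (eqVneq y x) => [->|yx].
      by rewrite set_edge_color_st compat_some; apply: notin_vcolors_neq.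
    rewrite set_edge_color_offr // set_edge_color_offl // set_edge_color_offr //.
    by rewrite ce_init_v // compat_some ce0_adj // del_edge_v_adj.
  - move=> y ey yv.
    rewrite /ce_rotate /ce_swap set_edge_color_offl // set_edge_color_offl //.
    case/or3P: (Nu ey) => /eqP Ey; first by rewrite Ey eqxx in yv.
      by rewrite Ey set_edge_color_st compat_some ce0_adj // del_edge_v_adj.
    rewrite Ey set_edge_color_offr // set_edge_color_offl //.
    by rewrite ce_init_u // compat_some; apply: notin_vcolors_neq.
apply: (complete_coloring P6) => a b eab.
rewrite /ce6 /ce_rotate /ce_swap /set_edge_color.
by case: ifP => // H6; do 4 case: ifP => //; rewrite ce_initE /uv_pair H6.
Qed.

End NonAdjacent.

Lemma colorable_from_del_edge x : e u x -> e v x -> total9_colorable e.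
Proof.
move=> eux evx.
have [euw|nuw] := boolP (e u w); first exact: colorable_adj_uw.
have vx : v != x by rewrite adj_neq.
have [z [euz zv zx Nu]] := deg3_third_neighbor du euv eux vx.
apply: (colorable_unless_free_ux_uz Nu) => free_ux free_uz.
apply: (colorable_unless_w_sees_ux_uz eux evx euz zv zx Nu free_ux free_uz).
exact: (colorable_rotate eux evx nuw euz zv zx Nu free_ux free_uz).
Qed.

End Recolor.

Lemma edge_on_3face_triangle (T : finType) (e : rel T) rot v u :
  simple_graph e -> rotation_system e rot -> edge_on_3face e rot v u ->
  exists2 x, e u x && e v x & ~~ fconnect (face_succ e rot) (v, u) (u, v).
Proof.
move=> sg rs /andP[evu o3].
have euv : e u v by rewrite sg.1.
have xu x : e u x -> x != u by move=> eux; rewrite eq_sym (neq_adj sg).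
have xv x : e v x -> x != v by move=> evx; rewrite eq_sym (neq_adj sg).
case/orP: o3 => o3.
  have [x [evx eux]] := face3_common_neighbor sg rs evu o3.
  by exists x; rewrite ?eux ?evx // (face3_not_fconnect_rev sg rs evu eux (xv _ evx) o3).
have [x [eux evx]] := face3_common_neighbor sg rs euv o3.
exists x; rewrite ?eux ?evx // fconnect_sym; last exact: face_succ_inj.
exact: (face3_not_fconnect_rev sg rs euv evx (xu _ eux) o3).
Qed.

Lemma del_edge_colorable (T : finType) (e : rel T) rot u v x :
  minimal_counterexample e -> planar_rotation e rot -> e v u -> e u x -> e v x ->
  ~~ fconnect (face_succ e rot) (v, u) (u, v) -> total9_colorable (del_edge e u v).
Proof.
move=> [[sg _ [deg8 _] no_fan _] minimal] pr evu eux evx npq.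
apply: minimal; first exact: simple_graph_del.
- by exists (del_rot rot u v); exact: (planar_rotation_del sg evu eux evx pr npq).
- by move=> a; apply: leq_trans (deg_del_le _ _ _ _) (deg8 a).
- by move/has_4fan_del.
- by rewrite (nedges_del sg evu) ltn_add2l addn1.
Qed.

Theorem lemma2p5 (T : finType) (e : rel T) (rot : T -> T -> T) :
  minimal_counterexample e ->
  planar_rotation e rot ->
  forall v u w : T,
    deg e v = 7 ->
    deg e u = 3 -> edge_on_3face e rot v u ->
    deg e w = 3 -> edge_on_3face e rot v w ->
    w = u.
Proof.
move=> mc pr v u w dv du vu3 dw vw3.
have [[sg _ _ _ not_colorable] _] := mc.
have [[evu _] [evw _]] := (andP vu3, andP vw3).
apply/eqP; apply: contraT => wu; exfalso; apply: not_colorable.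
have [x /andP[eux evx] npq] := edge_on_3face_triangle sg pr.1 vu3.
have [cv0 [ce0 [C1 C2 C3 C4]]] := del_edge_colorable mc pr evu eux evx npq.
exact: (colorable_from_del_edge sg evu evw wu du dw dv C1 C2 C3 C4 eux evx).
Qed.
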